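(* Let $G=(V,E)$ be a graph with $n$ vertices and let $f_0, f_t$ be token-placements of $G$ with $f_0 \simeq f_t$. Then $\mathrm{OPT}(f_0,f_t) \le \binom{n}{2}$.
   Context: Graphs are finite, simple and undirected; $n=|V|$. Let $C=\{1,\dots,c\}$ be a set of colors. A token-placement of $G$ is a surjective map $f\colon V\to C$ ($f(v)$ is the color of the token on $v$). Two distinct token-placements $f,f'$ are adjacent if there is an edge $uv\in E$ with $f'(u)=f(v)$, $f'(v)=f(u)$ and $f'(w)=f(w)$ for all $w\in V\setminus\{u,v\}$ (i.e. $f'$ arises from $f$ by swapping the tokens on the adjacent vertices $u,v$). A swapping sequence between $f$ and $f'$ is a sequence $f_1=f,f_2,\dots,f_h=f'$ of token-placements in which $f_{k-1}$ and $f_k$ are adjacent for all $k$; its length is $h-1$. $\mathrm{OPT}(f,f')$ denotes the minimum length of a swapping sequence between $f$ and $f'$ ($\infty$ if none exists). We write $f\simeq f'$ if for every connected component $K$ of $G$ and every color $i$, the number of vertices of $K$ with $f$-color $i$ equals the number with $f'$-color $i$. *)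

From mathcomp Require Import all_boot.
Set Implicit Arguments. Unset Strict Implicit. Unset Printing Implicit Defensive.

Definition simple_graph (T : finType) (e : rel T) : Prop :=
  symmetric e /\ irreflexive e.

(* Colours C = {1,..,c} are represented by 'I_c = {0,..,c-1}. *)
Definition placement (T : finType) (c : nat) := {ffun T -> 'I_c}.

Definition token_placement (T : finType) (c : nat) (f : placement T c) : bool :=
  [forall i : 'I_c, exists v : T, f v == i].

Definition swap_adj (T : finType) (e : rel T) (c : nat) : rel (placement T c) :=
  fun f f' =>
    (f != f') &&
    [exists u : T, exists v : T,
      [&& e u v, f' u == f v, f' v == f u &
          [forall w : T, (w != u) && (w != v) ==> (f' w == f w)]]].

(* A swapping sequence f_1 = f, f_2, ..., f_h = f' is f :: s with
   last f s = f'; all members are token-placements and consecutive ones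
   are adjacent. Its length is h - 1 = size s. *)
Definition swapping_seq (T : finType) (e : rel T) (c : nat)
    (f f' : placement T c) (s : seq (placement T c)) : Prop :=
  [/\ all (@token_placement T c) (f :: s), path (@swap_adj T e c) f s & last f s = f'].

(* OPT(f,f') <= k : there is a swapping sequence between f and f' of length
   at most k (OPT is the minimum such length). *)
Definition OPT_le (T : finType) (e : rel T) (c : nat)
    (f f' : placement T c) (k : nat) : Prop :=
  exists s, @swapping_seq T e c f f' s /\ size s <= k.

Definition same_comp_counts (T : finType) (e : rel T) (c : nat)
    (f f' : placement T c) : Prop :=
  forall (u : T) (i : 'I_c),
    #|[set v | connect e u v & f v == i]| = #|[set v | connect e u v & f' v == i]|.

From mathcomp Require Import all_boot fingroup perm.
Set Implicit Arguments. Unset Strict Implicit. Unset Printing Implicit Defensive.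

(* Induction on the number of vertices that are not yet frozen.  In a
   component K of the remaining graph pick a vertex v whose removal does not
   disconnect K (a vertex of maximal distance from a root); K contains a token
   of colour ft(v), and bubbling it along a shortest path to v costs at most
   |K| - 1 <= n - 1 swaps and only permutes tokens inside K.  Freezing v, the
   colour counts still agree on every component of the graph with v deleted,
   so the total number of swaps is at most (n-1) + (n-2) + ... + 0 = C(n,2). *)

Section NonCutVertex.
Variables (T : finType) (R : rel T) (r : T).

Definition avoid (v : T) : rel T := [rel x y | [&& R x y, x != v & y != v]].

Definition dist_pred (w : T) : pred nat := fun n =>
  connect R r w ==> [exists p : n.-tuple T, path R r p && (last r p == w)].

Lemma dist_pred_ex w : exists n, dist_pred w n.
Proof.
rewrite /dist_pred; case: (boolP (connect R r w)) => [/connectP[p pp ->]|_].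
  by exists (size p); apply/existsP; exists (in_tuple p); rewrite /= pp eqxx.
by exists 0.
Qed.

(* Unreachable vertices get distance 0. *)
Definition dist (w : T) : nat := ex_minn (dist_pred_ex w).

Lemma dist_path p : path R r p -> dist (last r p) <= size p.
Proof.
move=> pp; rewrite /dist; case: ex_minnP => d _; apply.
by apply/implyP => _; apply/existsP; exists (in_tuple p); rewrite /= pp eqxx.
Qed.

Lemma dist_shortest w : connect R r w ->
  exists2 p, path R r p && (last r p == w) & size p = dist w.
Proof.
move=> rw; rewrite /dist; case: ex_minnP => d /implyP/(_ rw)/existsP[t pt] _.
by exists t; rewrite ?size_tuple.
Qed.

Lemma dist_parent w : connect R r w -> w != r ->
  exists2 y, connect R r y && R y w & dist y < dist w.
Proof.
move=> /dist_shortest[p /andP[pp /eqP lp] <-] wr.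
case/lastP: p pp lp => [_ /= lp|p y]; first by rewrite lp eqxx in wr.
rewrite rcons_path last_rcons size_rcons => /andP[pp Ry] yw; subst y.
exists (last r p); last by rewrite ltnS dist_path.
by rewrite Ry andbT; apply/connectP; exists p.
Qed.

Lemma exists_noncut : exists2 v, connect R r v &
  forall w, connect R r w -> w != v -> connect (avoid v) r w.
Proof.
have r_r : r \in connect R r by rewrite inE connect0.
have [v rv vmax] := arg_maxnP dist r_r.
exists v => //.
suff reach m w : dist w < m -> connect R r w -> w != v -> connect (avoid v) r w.
  by move=> w; apply: reach (ltnSn _).
elim: m w => // m IH w ltwm rw wv.
have [->|wr] := eqVneq w r; first exact: connect0.
have [y /andP[ry Ryw] ltyw] := dist_parent rw wr.
have yv : y != v.
  by apply: contraTneq ltyw => ->; rewrite -leqNgt; apply: vmax.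
apply: connect_trans (IH y (leq_trans ltyw ltwm) ry yv) (connect1 _).
by rewrite /avoid /= Ryw yv wv.
Qed.

End NonCutVertex.

Section Relabelling.
Variables (T : finType) (e : rel T) (c : nat).
Implicit Types (f g h : placement T c) (s : {perm T}) (A : {set T}).

Definition relabel f s : placement T c := [ffun z => f (s z)].

Lemma relabel1 f : relabel f 1%g = f.
Proof. by apply/ffunP => z; rewrite ffunE perm1. Qed.

Lemma relabelM f s t : relabel (relabel f s) t = relabel f (t * s)%g.
Proof. by apply/ffunP => z; rewrite !ffunE permM. Qed.

Lemma relabel_token f s : token_placement f -> token_placement (relabel f s).
Proof.
move=> /forallP tf; apply/forallP => i; have /existsP[w /eqP <-] := tf i.
by apply/existsP; exists ((s^-1)%g w); rewrite ffunE permKV.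
Qed.

Lemma relabel_tpermE f x y : f x = f y -> relabel f (tperm x y) = f.
Proof. by move=> fxy; apply/ffunP => z; rewrite ffunE; case: tpermP => // ->. Qed.

Lemma swap_adj_tperm f x y : e x y -> f x != f y -> swap_adj e f (relabel f (tperm x y)).
Proof.
move=> exy fxy; apply/andP; split.
  by apply: contraNneq fxy => /ffunP/(_ x); rewrite ffunE tpermL => ->.
apply/existsP; exists x; apply/existsP; exists y.
rewrite exy !ffunE tpermL tpermR !eqxx /=; apply/forallP => w.
by apply/implyP => /andP[wx wy]; rewrite ffunE tpermD // eq_sym.
Qed.

Lemma OPT_le_refl f : token_placement f -> OPT_le e f f 0.
Proof. by move=> tf; exists [::]; split => //; split; rewrite //= tf. Qed.

Lemma OPT_le_le f g m n : OPT_le e f g m -> m <= n -> OPT_le e f g n.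
Proof. by move=> [s [fs sm]] mn; exists s; split; last exact: leq_trans mn. Qed.

Lemma OPT_le_trans f g h m n :
  OPT_le e f g m -> OPT_le e g h n -> OPT_le e f h (m + n).
Proof.
move=> [s1 [[a1 p1 l1] sz1]] [s2 [[a2 p2 l2] sz2]].
exists (s1 ++ s2); split; last by rewrite size_cat leq_add.
split; last by rewrite last_cat l1.
  by rewrite -cat_cons all_cat a1; case/andP: a2.
by rewrite cat_path p1 l1.
Qed.

Lemma OPT_le_swap f x y : e x y -> token_placement f ->
  OPT_le e f (relabel f (tperm x y)) 1.
Proof.
move=> exy tf; have [fxy|fxy] := eqVneq (f x) (f y).
  by rewrite relabel_tpermE //; apply: OPT_le_le (OPT_le_refl tf) _.
exists [:: relabel f (tperm x y)]; split => //; split => //=.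
  by rewrite tf relabel_token.
by rewrite swap_adj_tperm.
Qed.

(* Bubbling the token of [x] along [p]: every other token on [x :: p] moves
   one step back. *)
Lemma OPT_le_transport f x p : path e x p -> token_placement f ->
  exists s, [/\ OPT_le e f (relabel f s) (size p), s (last x p) = x &
                forall z, z \notin x :: p -> s z = z].
Proof.
elim: p x f => [|y p IH] x f /=.
  by move=> _ tf; exists 1%g; rewrite relabel1; split=> [||z _]; rewrite ?perm1 //; apply: OPT_le_refl.
move=> /andP[exy yp] tf.
have [s [fs sl sfix]] := IH y _ yp (relabel_token (tperm x y) tf).
exists (s * tperm x y)%g; split.
- by rewrite -relabelM -add1n; apply: OPT_le_trans fs; apply: OPT_le_swap.
- by rewrite permM sl tpermR.
- move=> z; rewrite !inE !negb_or => /and3P[zx zy zp].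
  by rewrite permM sfix ?inE ?negb_or ?zy // tpermD // eq_sym.
Qed.

Definition ncol (A : {set T}) f (i : 'I_c) : nat := #|[set z in A | f z == i]|.

Lemma eq_ncol A f g i : {in A, f =1 g} -> ncol A f i = ncol A g i.
Proof.
by move=> fg; apply: eq_card => z; rewrite !inE; case: (boolP (z \in A)) => //= /fg ->.
Qed.

Lemma ncol_set1 u f i : ncol [set u] f i = (f u == i).
Proof.
rewrite /ncol; case: (eqVneq (f u) i) => [fu|fu] /=.
  by rewrite -(cards1 u); apply: eq_card => z; rewrite !inE; case: eqP => // ->; rewrite fu eqxx.
apply/eqP; rewrite cards_eq0; apply/eqP/setP => z.
by rewrite !inE; case: eqP => // ->; rewrite (negbTE fu).
Qed.

Lemma ncolD1 A v f i : v \in A -> ncol A f i = (f v == i) + ncol (A :\ v) f i.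
Proof.
move=> vA; rewrite /ncol (cardsD1 v [set z in A | f z == i]) !inE vA /=.
by apply/eqP; rewrite eqn_add2l; apply/eqP/eq_card => z; rewrite !inE andbA.
Qed.

Lemma ncol_relabel A f s i : (forall z, z \notin A -> s z = z) ->
  ncol A (relabel f s) i = ncol A f i.
Proof.
move=> sfix; have sA z : (s z \in A) = (z \in A).
  case: (boolP (z \in A)) => zA; last by rewrite sfix // (negbTE zA).
  by apply: contraTT zA => szA; move/perm_inj: (sfix _ szA) => <-.
rewrite /ncol -[in RHS](card_preimset _ (@perm_inj _ s)).
by apply: eq_card => z; rewrite !inE ffunE sA.
Qed.

End Relabelling.

Section Components.
Variables (T : finType) (e : rel T) (c : nat) (ft : placement T c).
Hypothesis e_sym : symmetric e.
Implicit Types (S : {set T}) (f : placement T c).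

Definition induced S : rel T := [rel x y | [&& e x y, x \in S & y \in S]].

Definition component S u : {set T} := [set z | connect (induced S) u z].

Definition same_counts_on S f : Prop :=
  forall u i, ncol (component S u) f i = ncol (component S u) ft i.

Lemma induced_connect_sym S : connect_sym (induced S).
Proof. by apply: sym_connect_sym => x y; rewrite /induced /= e_sym (andbC (x \in S)). Qed.

Lemma induced_setT : induced [set: T] =2 e.
Proof. by move=> x y; rewrite /induced /= !in_setT !andbT. Qed.

Lemma induced_sub S : subrel (induced S) e.
Proof. by move=> x y /and3P[]. Qed.

Lemma induced_subset S1 S2 : S1 \subset S2 -> subrel (induced S1) (induced S2).
Proof.
by move=> /subsetP sub x y /and3P[exy xS yS]; rewrite /induced /= exy !sub.
Qed.

Lemma avoid_induced S v : avoid (induced S) v =2 induced (S :\ v).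
Proof.
move=> x y; rewrite /avoid /induced /= !in_setD1.
by case: (x != v); case: (y != v); rewrite ?andbF ?andbT.
Qed.

Lemma connect_induced_in S u z : u \in S -> connect (induced S) u z -> z \in S.
Proof.
move=> uS /connectP[p up ->]; elim: p u uS up => //= y p IH u _.
by case/andP=> /and3P[_ _ yS]; apply: IH.
Qed.

Lemma component_sub S u : u \in S -> component S u \subset S.
Proof. by move=> uS; apply/subsetP => z; rewrite inE; apply: connect_induced_in. Qed.

Lemma component_notin S u : u \notin S -> component S u = [set u].
Proof.
move=> uS; apply/setP => z; rewrite !inE; apply/idP/eqP => [|->]; last exact: connect0.
case/connectP=> [[|y p] /= up ->] //.
by move: up; rewrite /induced /= (negbTE uS) andbF.
Qed.

Lemma component_setD1 S u v :
  v \notin component S u -> component (S :\ v) u = component S u.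
Proof.
move=> vK; apply/setP => z; rewrite !inE; apply/idP/idP.
  by apply: connect_sub => x y /(induced_subset (subsetDl S [set v]))/connect1.
case/connectP=> p up ->; apply/connectP; exists p => //.
have Kp : all (connect (induced S) u) (u :: p).
  by apply/allP => w /(path_connect up).
apply: sub_in_path Kp up => x y /= ux uy /and3P[exy xS yS].
have notv w : connect (induced S) u w -> w != v.
  by apply: contraTneq => ->; rewrite inE in vK.
by rewrite /induced /= !in_setD1 exy xS yS !notv.
Qed.

Lemma same_counts_notin S f u : same_counts_on S f -> u \notin S -> f u = ft u.
Proof.
move=> bal uS; move: (bal u (f u)); rewrite component_notin // !ncol_set1 eqxx.
by case: eqP.
Qed.

Section RemoveNonCut.
Variables (S : {set T}) (f : placement T c) (r v : T) (s : {perm T}).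
Let K := component S r.
Hypotheses (bal : same_counts_on S f) (rS : r \in S) (vK : v \in K).
Hypothesis noncut : forall w, w \in K -> w != v -> connect (induced (S :\ v)) r w.
Hypothesis s_fix : forall z, z \notin K -> s z = z.
Hypothesis fv : relabel f s v = ft v.

Lemma component_noncut u : u \in K -> u != v -> component (S :\ v) u = K :\ v.
Proof.
move=> uK uv; have KS := subsetP (component_sub rS).
apply/setP => z; rewrite in_setD1 inE; apply/idP/andP => [uz|[zv zK]].
  have uSv : u \in S :\ v by rewrite in_setD1 uv KS.
  split; first by have := connect_induced_in uSv uz; rewrite in_setD1 => /andP[].
  rewrite inE; apply: connect_trans (_ : connect _ r u) (connect_sub _ uz).
    by rewrite inE in uK.
  by move=> x y /(induced_subset (subsetDl S [set v]))/connect1.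
by apply: connect_trans (noncut zK zv); rewrite induced_connect_sym noncut.
Qed.

Lemma same_counts_remove : same_counts_on (S :\ v) (relabel f s).
Proof.
have KS := subsetP (component_sub rS).
move=> u i; have [uv|uSv] := boolP (u \in S :\ v); last first.
  rewrite component_notin // !ncol_set1; congr (_ == i).
  have [-> //|uv] := eqVneq u v.
  have uS : u \notin S by rewrite in_setD1 uv in uSv.
  rewrite ffunE s_fix; first exact: same_counts_notin bal uS.
  by apply: contra uS; apply: KS.
have [uK|uK] := boolP (u \in K).
  rewrite component_noncut //; last by case/setD1P: uv.
  apply/eqP; rewrite -(eqn_add2l (relabel f s v == i)) -ncolD1 // fv -ncolD1 //.
  by rewrite ncol_relabel // bal.
have Ku z : z \in component S u -> z \notin K.
  rewrite !inE => uz; apply: contra uK => rz; rewrite inE.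
  by apply: connect_trans rz _; rewrite induced_connect_sym.
rewrite component_setD1; last exact: contraL (Ku v) vK.
rewrite -bal; apply: eq_ncol => z /Ku zK.
by rewrite ffunE s_fix.
Qed.

End RemoveNonCut.

Lemma OPT_le_same_counts S f : token_placement f -> same_counts_on S f ->
  OPT_le e f ft 'C(#|S|, 2).
Proof.
move Sn : #|S| => n; elim: n S f Sn => [|n IH] S f Sn tf bal.
  have S0 : S = set0 by apply/eqP; rewrite -cards_eq0 Sn.
  have fft : f = ft by apply/ffunP => u; apply: same_counts_notin bal _; rewrite S0 inE.
  by rewrite -fft; apply: OPT_le_refl.
have [r rS] : exists r, r \in S by apply/set0Pn; rewrite -cards_eq0 Sn.
set K := component S r.
have [v rv noncut] := exists_noncut (induced S) r.
have vK : v \in K by rewrite inE.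
have [x xK fx] : exists2 x, x \in K & f x = ft v.
  have : 0 < ncol K ft (ft v) by apply/card_gt0P; exists v; rewrite inE vK eqxx.
  by rewrite -bal => /card_gt0P[x]; rewrite inE => /andP[xK /eqP]; exists x.
have xv : connect (induced S) x v.
  by apply: connect_trans rv; rewrite induced_connect_sym; rewrite inE in xK.
move/connectP: xv => [p0 xp0]; case: (shortenP xp0) => p xp up _ vp {p0 xp0}.
have pK : {subset x :: p <= K}.
  move=> z /(path_connect xp) xz; rewrite inE in xK; rewrite inE.
  exact: connect_trans xK xz.
have size_p : size (x :: p) <= n.+1.
  rewrite -Sn cardE; apply: (uniq_leq_size up) => z /pK zK.
  by rewrite mem_enum; apply: (subsetP (component_sub rS)).
have [s [fs sl sfix]] := OPT_le_transport (sub_path (@induced_sub S) xp) tf.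
have bal' : same_counts_on (S :\ v) (relabel f s).
  apply: (same_counts_remove bal rS vK) => [w wK wv|z zK|].
  - by rewrite -(eq_connect (avoid_induced S v)); apply: noncut; rewrite inE in wK.
  - by apply: sfix; apply: contra zK; apply: pK.
  - by rewrite ffunE {1}vp sl fx.
have Sv : #|S :\ v| = n.
  by move: Sn; rewrite (cardsD1 v) (connect_induced_in rS rv) add1n => -[].
apply: OPT_le_le (OPT_le_trans fs (IH _ _ Sv (relabel_token s tf) bal')) _.
by rewrite binS bin1 addnC leq_add2l.
Qed.

End Components.

Theorem mainTheorem1 (T : finType) (e : rel T) (c : nat)
    (f0 ft : placement T c) :
  simple_graph e ->
  token_placement f0 -> token_placement ft ->
  @same_comp_counts T e c f0 ft ->
  @OPT_le T e c f0 ft 'C(#|T|, 2).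
Proof.
move=> [e_sym _] tf0 _ same; rewrite -cardsT.
apply: (OPT_le_same_counts e_sym tf0) => u i.
have ncolT g : ncol (component e [set: T] u) g i = #|[set z | connect e u z & g z == i]|.
  by apply: eq_card => z; rewrite !inE (eq_connect (induced_setT e)).
by rewrite !ncolT.
Qed.
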